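(* Let $G$ be a bipartite graph with bipartition $\{X,Y\}$, and let $(S,T)$ be a minimum barrier of $G$. Then: (i) $T\subseteq X$; (ii) for each component $C$ of $G-(S\cup T)$ that is not $T$-odd, $\varepsilon_G(T,C)=0$; (iii) for each $T$-odd component $C$ of $G-(S\cup T)$ and each $u\in T$, $\varepsilon_G(u,C)\le 1$; (iv) if $O_1,\dots,O_q$ are the $T$-odd components of $G-(S\cup T)$, where $q=q(S,T)$, then $|T|-|S|>\frac12\sum_{i=1}^{q}\big(\varepsilon_G(T,O_i)-1\big)$.
   Context: For disjoint $A,B\subseteq V(G)$, $\varepsilon_G(A,B)$ is the number of edges with one endpoint in $A$ and the other in $B$; for a subgraph $C$, $\varepsilon_G(A,C)=\varepsilon_G(A,V(C))$, and $\varepsilon_G(u,C)=\varepsilon_G(\{u\},C)$. For $S\subseteq X$ and $T\subseteq X\cup Y$ with $S\cap T=\varnothing$: a component $C$ of $G-(S\cup T)$ is $T$-odd if $\varepsilon_G(T,C)$ is odd; $q(S,T)$ is the number of $T$-odd components; $\delta(S,T)=2|S|+\sum_{v\in T}\deg_{G-S}(v)-2|T\cap X|-q(S,T)$. Such a pair $(S,T)$ is a barrier if $\delta(S,T)<0$; its size is $|S\cup T|$; a minimum barrier is a barrier of smallest possible size. *)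

From mathcomp Require Import all_boot all_order all_algebra.
Set Implicit Arguments. Unset Strict Implicit. Unset Printing Implicit Defensive.
Import GRing.Theory Num.Theory.

Section Barrier.
Variable V : finType.
Variable e : rel V.

Definition simple_graph := symmetric e /\ irreflexive e.

Definition bipartition (X Y : {set V}) :=
  [/\ X :&: Y = set0, X :|: Y = [set: V] &
      forall x y, e x y -> (x \in X /\ y \in Y) \/ (x \in Y /\ y \in X)].

(* eps(A,B) : number of edges with one end in A and the other in B
   (for disjoint A, B: ordered pairs (a,b), a in A, b in B, adjacent). *)
Definition eps (A B : {set V}) : nat :=
  #|[set p : V * V | [&& p.1 \in A, p.2 \in B & e p.1 p.2]]|.

Definition del_rel (W : {set V}) : rel V :=
  [rel x y | [&& e x y, x \notin W & y \notin W]].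

Definition component (W C : {set V}) : bool :=
  [exists x, (x \notin W) && (C == [set y | connect (del_rel W) x y])].

Definition deg_del (S : {set V}) (v : V) : nat := #|[set w | (w \notin S) && e v w]|.

Definition odd_comps (S T : {set V}) : {set {set V}} :=
  [set C : {set V} | component (S :|: T) C && odd (eps T C)].

Definition q (S T : {set V}) : nat := #|odd_comps S T|.

Definition delta (X S T : {set V}) : int :=
  (2 * #|S|)%:Z + (\sum_(v in T) deg_del S v)%:Z - (2 * #|T :&: X|)%:Z - (q S T)%:Z.

Definition barrier (X Y S T : {set V}) : Prop :=
  [/\ S \subset X, T \subset X :|: Y, S :&: T = set0 & (delta X S T < 0)%R].

Definition min_barrier (X Y S T : {set V}) : Prop :=
  barrier X Y S T /\
  forall S' T', barrier X Y S' T' -> #|S :|: T| <= #|S' :|: T'|.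

End Barrier.

(* A barrier has delta(S,T) <= -2: delta(S,T) is even, because the degrees
   of T in G - S count the edges inside T twice plus eps(T,C) for every
   component C of G - (S u T), and the parity of the latter sum is q(S,T).
   For u in T, the smaller pair (S, T - u) is not a barrier, and deleting u
   from T destroys at most a(u) T-odd components, a(u) being the number of
   T-odd components adjacent to u.  Comparing delta before and after gives
   deg_{G-S}(u) + 2 <= 2[u in X] + a(u); as a(u) <= deg_{G-S}(u), u lies in X
   and the edges of u outside S go to pairwise distinct T-odd components,
   which is (i)-(iii).  Then (iv) is delta(S,T) < 0 rewritten with (i). *)

From mathcomp Require Import all_boot all_order all_algebra.
From mathcomp Require Import zify lra.
Import GRing.Theory Num.Theory.
Set Implicit Arguments. Unset Strict Implicit. Unset Printing Implicit Defensive.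

Section Components.
Variables (V : finType) (e : rel V).
Hypothesis e_sym : symmetric e.

Definition component_of (W : {set V}) (x : V) := [set y | connect (del_rel e W) x y].

Lemma del_rel_sym (W : {set V}) : symmetric (del_rel e W).
Proof.
by move=> x y; rewrite /del_rel /= e_sym; case: (x \in W); case: (y \in W); rewrite ?andbF.
Qed.

Lemma mem_component_of (W : {set V}) x : x \in component_of W x.
Proof. by rewrite inE connect0. Qed.

Lemma component_of_notin (W : {set V}) x y :
  x \notin W -> y \in component_of W x -> y \notin W.
Proof.
rewrite inE => xW /connectP [p]; elim: p x xW => [|z p IH] x xW /=.
  by move=> _ ->.
by case/andP => /and3P [_ _ zW]; apply: IH.
Qed.

Lemma component_of_component (W : {set V}) x :
  x \notin W -> component e W (component_of W x).
Proof. by move=> xW; apply/existsP; exists x; rewrite xW eqxx. Qed.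

Lemma component_notin (W C : {set V}) w :
  component e W C -> w \in C -> w \notin W.
Proof. by case/existsP => x /andP [xW /eqP ->]; apply: component_of_notin. Qed.

Lemma component_eq_of (W C : {set V}) w :
  component e W C -> w \in C -> C = component_of W w.
Proof.
case/existsP => x /andP [_ /eqP ->]; rewrite inE => xw.
apply/setP => y; rewrite !inE; apply/idP/idP => [|wy]; last exact: connect_trans wy.
by apply: connect_trans; rewrite (sym_connect_sym (del_rel_sym W)).
Qed.

Lemma card_by_components (W D : {set V}) :
  [disjoint D & W] -> #|D| = \sum_(C | component e W C) #|D :&: C|.
Proof.
move=> DW; rewrite -sum1_card (partition_big (component_of W) (component e W)).
  apply: eq_bigr => C CW; rewrite -sum1_card; apply: eq_bigl => w.
  rewrite inE; case: (boolP (w \in D)) => //= wD.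
  apply/eqP/idP => [<-|wC]; first exact: mem_component_of.
  by rewrite -(component_eq_of CW wC).
move=> w wD; apply: component_of_component.
by rewrite (disjointFr DW).
Qed.

Lemma component_delete (W C : {set V}) u :
  component e W C -> (forall c, c \in C -> ~~ e u c) -> component e (W :\ u) C.
Proof.
move=> CW noadj; case/existsP: (CW) => x /andP [xW /eqP defC].
apply/existsP; exists x; rewrite !inE negb_and xW orbT /=; apply/eqP.
have xC : x \in C by rewrite defC mem_component_of.
apply/setP => y; rewrite inE; apply/idP/idP => [yC|].
  rewrite defC inE in yC; apply: connect_sub yC => a b /and3P [eab aW bW].
  by apply: connect1; rewrite /del_rel /= eab !inE !negb_and aW bW !orbT.
have symW := sym_connect_sym (del_rel_sym (W :\ u)).
suff clC : closed (del_rel e (W :\ u)) C by move/(closed_connect clC) <-.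
apply: (intro_closed symW) => a b /and3P [eab _ bW] aC.
have bu : b != u by apply: contraTneq eab => ->; rewrite e_sym noadj.
have := aC; rewrite defC !inE => /connect_trans; apply; apply: connect1.
by move: bW; rewrite /del_rel /= eab (component_notin CW aC) !inE negb_and bu.
Qed.

End Components.

Lemma odd_sum_card (I : finType) (P : pred I) (f : I -> nat) :
  odd (\sum_(i | P i) f i) = odd #|[set i | P i & odd (f i)]|.
Proof.
suff: \sum_(i | P i) f i = #|[set i | P i & odd (f i)]| %[mod 2].
  by rewrite !modn2 => /(congr1 odd); rewrite !oddb.
rewrite -modn_summ -sum1dep_card big_mkcondr /=.
by congr (_ %% 2); apply: eq_bigr => i _; rewrite modn2; case: odd.
Qed.

Lemma even_card_symmetric (V : finType) (r : rel V) :
  symmetric r -> irreflexive r -> ~~ odd #|[set p : V * V | r p.1 p.2]|.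
Proof.
move=> r_sym r_irr; set R := [set p : V * V | _].
set B := [set p : V * V | enum_rank p.1 < enum_rank p.2].
have swap_inj : injective (fun p : V * V => (p.2, p.1)) by move=> [? ?] [? ?] [-> ->].
rewrite -(cardsID B R); suff -> : #|R :\: B| = #|R :&: B| by rewrite addnn odd_double.
rewrite -(card_preimset _ swap_inj); apply: eq_card => -[x y].
rewrite !inE /= [r y x]r_sym.
case: (boolP (r x y)) => rxy; rewrite ?andbF //= andbT -leqNgt leq_eqVlt.
suff /negbTE -> : (enum_rank x : nat) != enum_rank y by [].
by apply: contraTneq rxy => /val_inj/enum_rank_inj ->; rewrite r_irr.
Qed.

Section Counting.
Variables (V : finType) (e : rel V).
Hypotheses (e_sym : symmetric e) (e_irr : irreflexive e).

Lemma eps_sum (A B : {set V}) : eps e A B = \sum_(v in A) #|[set w in B | e v w]|.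
Proof.
rewrite /eps -sum1dep_card.
rewrite -(pair_big_dep (mem A) (fun v w => (w \in B) && e v w) (fun _ _ => 1)) /=.
by apply: eq_bigr => v _; rewrite sum1dep_card.
Qed.

Lemma eps1E (v : V) (B : {set V}) : eps e [set v] B = #|[set w in B | e v w]|.
Proof. by rewrite eps_sum big_set1. Qed.

Lemma eps_sum1 (A B : {set V}) : eps e A B = \sum_(v in A) eps e [set v] B.
Proof. by rewrite eps_sum; apply: eq_bigr => v _; rewrite eps1E. Qed.

Lemma deg_del_split (S T : {set V}) v : S :&: T = set0 ->
  deg_del e S v = eps e [set v] T + \sum_(C | component e (S :|: T) C) eps e [set v] C.
Proof.
move=> ST; have dST : [disjoint S & T] by rewrite -setI_eq0 ST.
rewrite eps1E; under eq_bigr do rewrite eps1E.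
rewrite /deg_del -(cardsID T); congr (_ + _).
  apply: eq_card => w; rewrite !inE.
  case: (boolP (w \in T)) => wT; last by rewrite !andbF.
  by rewrite (disjointFl dST wT) andbT.
rewrite (@card_by_components _ _ e_sym (S :|: T)); last first.
  rewrite disjoints_subset; apply/subsetP => w.
  by rewrite !inE negb_or => /andP [-> /andP [->]].
apply: eq_bigr => C CW; apply: eq_card => w; rewrite !inE.
case: (boolP (w \in C)) => [wC|]; rewrite ?andbF //=.
by move: (component_notin CW wC); rewrite inE negb_or andbT => /andP [-> ->].
Qed.

Lemma sum_deg_del (S T A : {set V}) : S :&: T = set0 ->
  \sum_(v in A) deg_del e S v = eps e A T + \sum_(C | component e (S :|: T) C) eps e A C.
Proof.
move=> ST; rewrite (eq_bigr _ (fun v _ => deg_del_split v ST)) big_split /= -eps_sum1.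
by rewrite exchange_big; congr (_ + _); apply: eq_bigr => C _; rewrite eps_sum1.
Qed.

Lemma odd_sum_deg_del (S T : {set V}) : S :&: T = set0 ->
  odd (\sum_(v in T) deg_del e S v) = odd (q e S T).
Proof.
move=> ST; rewrite (sum_deg_del T ST) oddD odd_sum_card.
have /negbTE -> : ~~ odd (eps e T T).
  apply: (even_card_symmetric (r := fun x y => [&& x \in T, y \in T & e x y])).
  - by move=> x y; rewrite e_sym andbCA.
  - by move=> x; rewrite e_irr !andbF.
by congr (odd _); apply: eq_card => C; rewrite !inE.
Qed.

End Counting.

Lemma leqif_neq0 n : (n != 0) <= n ?= iff (n <= 1).
Proof. by case: n => [|[]]. Qed.

Section MinimumBarrier.
Variables (V : finType) (e : rel V).
Hypotheses (e_sym : symmetric e) (e_irr : irreflexive e).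

Lemma sum_components_odd (S T : {set V}) (F : {set V} -> nat) :
  \sum_(C | component e (S :|: T) C) F C =
  \sum_(C in odd_comps e S T) F C +
  \sum_(C | component e (S :|: T) C && ~~ odd (eps e T C)) F C.
Proof.
rewrite (bigID (fun C => odd (eps e T C))) /=; congr (_ + _).
by apply: eq_bigl => C; rewrite inE.
Qed.

Lemma delta_lt0E (X S T : {set V}) :
  (delta e X S T < 0)%R =
  (2 * #|S| + \sum_(v in T) deg_del e S v < 2 * #|T :&: X| + q e S T).
Proof. by rewrite /delta -addrA -opprD subr_lt0 -!PoszD ltz_nat. Qed.

Lemma barrier_gap (X S T : {set V}) : S :&: T = set0 -> (delta e X S T < 0)%R ->
  2 * #|S| + \sum_(v in T) deg_del e S v + 2 <= 2 * #|T :&: X| + q e S T.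
Proof.
move=> ST; rewrite delta_lt0E; have := odd_sum_deg_del e_sym e_irr ST.
lia.
Qed.

Lemma min_barrier_drop (X Y S T : {set V}) u :
  min_barrier e X Y S T -> u \in T -> ~ (delta e X S (T :\ u) < 0)%R.
Proof.
case=> -[SX TXY ST _] minST uT lt0.
have dST : [disjoint S & T] by rewrite -setI_eq0 ST.
have /minST : barrier e X Y S (T :\ u).
  split=> //; first exact: subset_trans (subD1set T u) TXY.
  by rewrite setIDA ST set0D.
apply/negP; rewrite -ltnNge; apply: proper_card; apply/properP; split.
  by apply: setUS; apply: subD1set.
by exists u; rewrite !inE ?uT ?orbT // (disjointFl dST uT) eqxx.
Qed.

Lemma odd_comps_drop (S T C : {set V}) u :
  S :&: T = set0 -> u \in T -> C \in odd_comps e S T -> eps e [set u] C = 0 ->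
  C \in odd_comps e S (T :\ u).
Proof.
move=> ST uT; rewrite !inE => /andP [CW oddC] /eqP; rewrite eps1E cards_eq0 => /eqP nbrs0.
have noadj c : c \in C -> ~~ e u c.
  by move=> cC; apply/negP => euc; have := in_set0 c; rewrite -nbrs0 inE cC euc.
have -> : eps e (T :\ u) C = eps e T C.
  by rewrite !eps_sum [RHS](big_setD1 u uT) /= nbrs0 cards0.
have -> : S :|: (T :\ u) = (S :|: T) :\ u.
  have dST : [disjoint S & T] by rewrite -setI_eq0 ST.
  by apply/setP => w; rewrite !inE; case: eqVneq => [->|] //=; rewrite (disjointFl dST uT).
by rewrite oddC andbT; apply: component_delete.
Qed.

Lemma q_drop (S T : {set V}) u : S :&: T = set0 -> u \in T ->
  q e S T <= \sum_(C in odd_comps e S T) (eps e [set u] C != 0) + q e S (T :\ u).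
Proof.
move=> ST uT; set adj := [set C | eps e [set u] C != 0].
rewrite /q -(cardsID adj (odd_comps e S T)) leq_add //.
  rewrite (big_setID adj) -sum1_card /=; apply/leq_trans/leq_addr.
  by apply: leq_sum => C; rewrite !inE => /andP [_ ->].
apply: subset_leq_card; apply/subsetP => C /setDP [oddC]; rewrite inE negbK => /eqP nadj.
exact: odd_comps_drop.
Qed.

Lemma min_barrier_vertex (X Y S T : {set V}) u :
  min_barrier e X Y S T -> u \in T ->
  u \in X /\ deg_del e S u <= \sum_(C in odd_comps e S T) (eps e [set u] C != 0).
Proof.
move=> minST uT; have [[_ _ ST ltST] _] := minST.
have no_gap := min_barrier_drop minST uT; rewrite delta_lt0E in no_gap.
have gap := barrier_gap ST ltST; rewrite (big_setD1 u uT) /= in gap.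
have cardTX : #|T :&: X| = (u \in X) + #|(T :\ u) :&: X|.
  rewrite (cardsD1 u) !inE uT /=; congr (_ + _).
  by apply: eq_card => w; rewrite !inE andbA.
have q_le := q_drop ST uT.
have adj_le_deg : \sum_(C in odd_comps e S T) (eps e [set u] C != 0) <= deg_del e S u.
  rewrite (deg_del_split e_sym u ST) sum_components_odd.
  rewrite addnCA; apply: leq_trans _ (leq_addr _ _).
  by apply: leq_sum => C _; case: (eps e [set u] C).
by case: (u \in X) in cardTX *; lia.
Qed.

Lemma min_barrier_vertex_edges (X Y S T : {set V}) u :
  min_barrier e X Y S T -> u \in T ->
  [/\ u \in X,
       forall C, component e (S :|: T) C -> ~~ odd (eps e T C) -> eps e [set u] C = 0 &
       forall C, C \in odd_comps e S T -> eps e [set u] C <= 1].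
Proof.
move=> minST uT; have [[_ _ ST _] _] := minST.
have [uX] := min_barrier_vertex minST uT.
rewrite (deg_del_split e_sym u ST) sum_components_odd.
have [] := leqif_sum (P := mem (odd_comps e S T)) (fun C _ => leqif_neq0 (eps e [set u] C)).
set a := \sum_(C in _) (_ != 0); set b := \sum_(C in _) eps e [set u] C.
set c := \sum_(C | _ && _) _.
move=> le_ab eq_ab le_abc.
have /andP [ab c0] : (a == b) && (c == 0) by apply/andP; split; apply/eqP; lia.
split=> //; last by move: ab; rewrite eq_ab => /forall_inP.
move: c0; rewrite /c sum_nat_eq0 => /forall_inP c0 C CW evC.
by apply/eqP/c0; rewrite CW.
Qed.

End MinimumBarrier.

Theorem lemma2p3 (V : finType) (e : rel V) (X Y S T : {set V}) :
  simple_graph e -> bipartition e X Y -> min_barrier e X Y S T ->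
  [/\ T \subset X,
      (forall C, component e (S :|: T) C -> ~~ odd (eps e T C) -> eps e T C = 0),
      (forall C, component e (S :|: T) C -> odd (eps e T C) ->
         forall u, u \in T -> eps e [set u] C <= 1) &
      ((#|T|%:Q - #|S|%:Q) >
         (1 / 2) * \sum_(C in odd_comps e S T) ((eps e T C)%:Q - 1))%R].
Proof.
move=> [e_sym e_irr] _ minST; have [[_ _ ST ltST] _] := minST.
have vertex := min_barrier_vertex_edges e_sym e_irr minST.
have TX : T \subset X by apply/subsetP => u /vertex [].
split=> //.
- move=> C CW evC; rewrite eps_sum1; apply: big1 => u /vertex [_ eps0 _].
  exact: eps0.
- by move=> C CW oddC u /vertex [_ _]; apply; rewrite inE CW oddC.
move: ltST; rewrite delta_lt0E (setIidPl TX) (sum_deg_del e_sym T ST).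
rewrite sum_components_odd /q => ltST.
have : (\sum_(C in odd_comps e S T) eps e T C + 2 * #|S| <
        2 * #|T| + #|odd_comps e S T|)%N by lia.
rewrite -(ltr_nat rat) !natrD sumrB -natr_sum sumr_const.
lra.
Qed.
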